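(* Let $G:\mathbb{R}^d\to\mathbb{R}$ be convex and $L$-smooth, let $B\in\mathbb{R}^{s\times d}$ and $b$ in the column space of $B$, and let $u^0\in\mathbb{R}^d$, $R>0$, $\varepsilon>0$. Define $G^{\nu}(u)=G(u)+\frac{\nu}{2}\|u^0-u\|^2$ with $\nu=\varepsilon/R^2$. Suppose there exist $u^*\in\operatorname{Argmin}_{u:Bu=b}G(u)$ and $u^*_\nu=\operatorname{argmin}_{u:Bu=b}G^\nu(u)$, that $\min_u G(u)$ exists, and let $D=G(u^* )-\min_uG(u)$. Assume $\|u^0-u^*\|^2\le R^2$ and set $$\delta=\frac{\varepsilon^2}{32\big(D+\frac\varepsilon2\big)\big(L+\frac{\varepsilon}{R^2}\big)}.$$ If $u\in\mathbb{R}^d$ satisfies $\|u-u^*_\nu\|^2\le\delta$, then $G(u)-G(u^* )\le\varepsilon$ and $\|Bu-b\|^2\le\delta\,\sigma_{\max}^2(B)$.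
   Context: $G$ is $L$-smooth if it is differentiable and $G(u')-G(u)-\langle\nabla G(u),u'-u\rangle\le\frac L2\|u'-u\|^2$ for all $u,u'$. $\sigma_{\max}(B)$ is the largest singular value of $B$. *)

From HB Require Import structures.
From mathcomp Require Import all_boot all_order all_algebra.
From mathcomp Require Import all_classical all_reals all_analysis.
Set Implicit Arguments. Unset Strict Implicit. Unset Printing Implicit Defensive.
Import Order.TTheory GRing.Theory Num.Theory.
Import numFieldNormedType.Exports.
Local Open Scope classical_set_scope.
Local Open Scope ring_scope.

Definition dotv (R : realType) (d : nat) (u v : 'cV[R]_d) : R :=
  \sum_(i < d) u i 0 * v i 0.
Definition sqnorm (R : realType) (d : nat) (u : 'cV[R]_d) : R := dotv u u.

Definition gradient (R : realType) (d : nat) (G : 'cV[R]_d -> R) (u : 'cV[R]_d)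
  : 'cV[R]_d := \col_(i < d) ('d G u (delta_mx i 0 : 'cV[R]_d)).

Definition convex_fun (R : realType) (d : nat) (G : 'cV[R]_d -> R) : Prop :=
  forall (u v : 'cV[R]_d) (t : R), 0 <= t -> t <= 1 ->
    G ((1 - t) *: u + t *: v) <= (1 - t) * G u + t * G v.

Definition L_smooth (R : realType) (d : nat) (L : R) (G : 'cV[R]_d -> R) : Prop :=
  (forall u, differentiable G u) /\
  forall u u' : 'cV[R]_d,
    G u' - G u - dotv (gradient G u) (u' - u) <= L / 2 * sqnorm (u' - u).

Definition sigma_max (R : realType) (s d : nat) (B : 'M[R]_(s, d)) : R :=
  Num.sqrt (sup [set a : R | eigenvalue (B^T *m B) a]).

(* unu minimizes G^nu over {v | B v = b}, which contains ustar, and the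
   penalty at ustar is at most nu Rr^2 / 2 = eps / 2; hence
   G unu <= G ustar + eps / 2.  For h = u - unu, smoothness bounds
   G u - G unu by <grad G unu, h> + L |h|^2 / 2, and comparing G (unu - t h)
   with min G bounds t <grad G unu, h> by D + eps / 2 + L t^2 |h|^2 / 2.
   The step t = 4 (D + eps / 2) / eps and |h|^2 <= delta make the total at
   most eps.
   As B unu = b, |B u - b|^2 = |B h|^2 <= sigma_max B ^ 2 |h|^2 because the
   largest eigenvalue of B^T B is the supremum l of its Rayleigh quotient:
   l - B^T B is positive semidefinite, and singular since an invertible
   positive semidefinite matrix is coercive by Cauchy-Schwarz. *)

From HB Require Import structures.
From mathcomp Require Import all_boot all_order all_algebra.
From mathcomp Require Import all_classical all_reals all_analysis.
From mathcomp Require Import ring lra.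
Set Implicit Arguments. Unset Strict Implicit. Unset Printing Implicit Defensive.
Import Order.TTheory GRing.Theory Num.Theory.
Local Open Scope ring_scope.

Lemma quadratic_ge0_discr (R : realFieldType) (a b c : R) : 0 <= c ->
  (forall t, 0 <= a + 2 * t * b + t ^+ 2 * c) -> b ^+ 2 <= a * c.
Proof.
move=> c_ge0 q_ge0; have [c_gt0|c_le0] := ltP 0 c.
  pose t := - b / c; have tc : t * c = - b by rewrite mulfVK ?gt_eqF.
  have : 0 <= a + t * b by have := q_ge0 t; rewrite expr2 -[t * t * c]mulrA tc; lra.
  move=> /(mulr_ge0 (ltW c_gt0)).
  by rewrite mulrDr mulrA (mulrC c t) tc mulrC expr2; lra.
have c0 : c = 0 by lra.
subst c; rewrite mulr0.
have [->|b_neq0] := eqVneq b 0; first by rewrite expr0n.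
have := q_ge0 (- (a + 1) / (2 * b)); have := q_ge0 0.
have -> : 2 * (- (a + 1) / (2 * b)) * b = - (a + 1) by field.
by rewrite !mulr0 mul0r; lra.
Qed.

Section QuadraticForm.
Variable R : realType.

Definition mxform n (A : 'M[R]_n) (x y : 'cV[R]_n) : R := (x^T *m A *m y) 0 0.

Lemma mxformE n (A : 'M[R]_n) x y :
  mxform A x y = \sum_i \sum_j x i 0 * A i j * y j 0.
Proof.
rewrite /mxform mxE (exchange_big _ _ _ _ _ (fun i j => x i 0 * A i j * y j 0)).
apply: eq_bigr => j _; rewrite !mxE big_distrl.
by apply: eq_bigr => i _; rewrite mxE.
Qed.

Lemma sqnorm_mxform n (x : 'cV[R]_n) : sqnorm x = mxform 1%:M x x.
Proof. by rewrite /mxform mulmx1 mxE; apply: eq_bigr => i _; rewrite mxE. Qed.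

Lemma sqr_coord_le_sqnorm n (x : 'cV[R]_n) i : x i 0 ^+ 2 <= sqnorm x.
Proof.
rewrite /sqnorm /dotv (bigD1 i) //= -expr2 lerDl.
by apply: sumr_ge0 => j _; rewrite -expr2 sqr_ge0.
Qed.

Lemma sqnorm_ge0 n (x : 'cV[R]_n) : 0 <= sqnorm x.
Proof. by apply: sumr_ge0 => i _; rewrite -expr2 sqr_ge0. Qed.

Lemma sqnorm_gt0 n (x : 'cV[R]_n) : x != 0 -> 0 < sqnorm x.
Proof.
apply: contraNT; rewrite -leNgt => x_le0; apply/eqP/matrixP => i j.
rewrite ord1 mxE; apply/eqP; rewrite -sqrf_eq0 eq_le sqr_ge0 andbT.
exact: le_trans (sqr_coord_le_sqnorm x i) x_le0.
Qed.

Lemma sqnorm0 n : sqnorm (0 : 'cV[R]_n) = 0.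
Proof. by rewrite /sqnorm /dotv big1 // => i _; rewrite mxE mul0r. Qed.

Lemma dotvZr n (x y : 'cV[R]_n) a : dotv x (a *: y) = a * dotv x y.
Proof. by rewrite /dotv mulr_sumr; apply: eq_bigr => i _; rewrite mxE mulrCA. Qed.

Lemma sqnormZ n (y : 'cV[R]_n) a : sqnorm (a *: y) = a ^+ 2 * sqnorm y.
Proof.
rewrite /sqnorm /dotv mulr_sumr; apply: eq_bigr => i _; rewrite !mxE; ring.
Qed.

Lemma mxformDl n (A : 'M[R]_n) x y z :
  mxform A (x + y) z = mxform A x z + mxform A y z.
Proof. by rewrite /mxform linearD /= !mulmxDl mxE. Qed.

Lemma mxformZl n (A : 'M[R]_n) a x z : mxform A (a *: x) z = a * mxform A x z.
Proof. by rewrite /mxform linearZ /= -!scalemxAl mxE. Qed.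

Lemma mxformDr n (A : 'M[R]_n) x y z :
  mxform A z (x + y) = mxform A z x + mxform A z y.
Proof. by rewrite /mxform mulmxDr mxE. Qed.

Lemma mxformZr n (A : 'M[R]_n) a x z : mxform A z (a *: x) = a * mxform A z x.
Proof. by rewrite /mxform -scalemxAr mxE. Qed.

Lemma mxform0 n (A : 'M[R]_n) : mxform A 0 0 = 0.
Proof. by rewrite /mxform mulmx0 mxE. Qed.

Lemma mxformC n (A : 'M[R]_n) x y : A^T = A -> mxform A x y = mxform A y x.
Proof.
move=> A_sym; have -> : mxform A x y = ((x^T *m A *m y)^T) 0 0 by rewrite mxE.
by rewrite !trmx_mul trmxK A_sym mulmxA.
Qed.

Lemma mxform_scalarB n (A : 'M[R]_n) a x :
  mxform (a%:M - A) x x = a * sqnorm x - mxform A x x.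
Proof.
rewrite sqnorm_mxform /mxform mulmx1 mulmxBr mulmxBl mul_mx_scalar.
by rewrite -scalemxAl !mxE.
Qed.

Lemma mxform_le_sqnorm n (A : 'M[R]_n) x :
  mxform A x x <= (\sum_i \sum_j `|A i j|) * sqnorm x.
Proof.
rewrite mxformE mulr_suml; apply: ler_sum => i _; rewrite mulr_suml.
apply: ler_sum => j _; apply: le_trans (ler_norm _) _.
rewrite !normrM mulrAC [X in _ <= X]mulrC ler_wpM2r //.
apply: le_trans (leif_mean_square _ _) _; rewrite !real_normK ?num_real //.
by have := sqr_coord_le_sqnorm x i; have := sqr_coord_le_sqnorm x j; lra.
Qed.

Lemma eigenvalue_mxform n (A : 'M[R]_n) a : eigenvalue A a ->
  exists2 x, x != 0 & mxform A x x = a * sqnorm x.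
Proof.
move=> /eigenvalueP[v vA v_neq0]; exists v^T; first by rewrite trmx_eq0.
by rewrite sqnorm_mxform /mxform trmxK vA mulmx1 -scalemxAl mxE.
Qed.

Section PositiveSemidefinite.
Variables (n : nat) (A : 'M[R]_n).
Hypotheses (A_sym : A^T = A) (A_psd : forall x, 0 <= mxform A x x).

Lemma mxform_CauchySchwarz x y : mxform A x y ^+ 2 <= mxform A x x * mxform A y y.
Proof.
apply: quadratic_ge0_discr => [|t]; first exact: A_psd.
have -> : mxform A x x + 2 * t * mxform A x y + t ^+ 2 * mxform A y y =
          mxform A (x + t *: y) (x + t *: y).
  by rewrite !(mxformDl, mxformDr, mxformZl, mxformZr) (mxformC y x A_sym); ring.
exact: A_psd.
Qed.

Lemma unitmx_psd_coercive : A \in unitmx ->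
  exists2 C, 0 < C & forall x, sqnorm x <= C * mxform A x x.
Proof.
move=> A_unit; pose N := (invmx A)^T; pose C := \sum_i \sum_j `|N i j|.
have C_ge0 : 0 <= C by do 2!apply: sumr_ge0 => ? _.
exists (1 + C) => [|x]; first lra.
have q_ge0 := A_psd x; have [s_gt0|s_le0] := ltP 0 (sqnorm x); last first.
  by apply: le_trans s_le0 _; rewrite mulr_ge0 //; lra.
have form_x_invx : mxform A x (invmx A *m x) = sqnorm x.
  by rewrite sqnorm_mxform /mxform mulmx1 mulmxA -(mulmxA x^T) mulmxV // mulmx1.
have form_invx : mxform A (invmx A *m x) (invmx A *m x) = mxform N x x.
  by rewrite /mxform trmx_mul -!mulmxA (mulmxA A) mulmxV // mul1mx.
(* Cauchy-Schwarz at (x, A^-1 x) gives |x|^4 <= <Ax, x> <A^-1 x, x>. *)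
have := mxform_CauchySchwarz x (invmx A *m x).
rewrite form_x_invx form_invx => CS.
have := mxform_le_sqnorm N x; rewrite -/C => N_le.
have := ler_wpM2l q_ge0 N_le; nra.
Qed.

End PositiveSemidefinite.

Lemma psd_max_eigenvalue n (A : 'M[R]_n) :
  A^T = A -> (forall x, 0 <= mxform A x x) -> (0 < n)%N ->
  exists2 l, eigenvalue A l & forall x, mxform A x x <= l * sqnorm x.
Proof.
move=> A_sym A_psd n_gt0.
pose T :=
  [set r : R | exists2 x, 0 < sqnorm x & r * sqnorm x <= mxform A x x]%classic.
have T_ubound c : (forall x, mxform A x x <= c * sqnorm x) -> ubound T c.
  move=> c_ub r [x s_gt0 r_le]; rewrite -(ler_pM2r s_gt0).
  exact: le_trans r_le (c_ub x).
have T0 : T 0.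
  pose e := delta_mx (Ordinal n_gt0) 0 : 'cV[R]_n.
  exists e; last by rewrite mul0r A_psd.
  apply: lt_le_trans (sqr_coord_le_sqnorm e (Ordinal n_gt0)).
  by rewrite mxE !eqxx expr1n.
have T_sup : has_sup T.
  by split; [exists 0 | eexists; apply: T_ubound => x; apply: mxform_le_sqnorm].
pose l := sup T.
have l_ub x : mxform A x x <= l * sqnorm x.
  have [s_gt0|s_le0] := ltP 0 (sqnorm x).
    rewrite -ler_pdivrMr //; apply: sup_upper_bound => //.
    by exists x; rewrite // divfK ?gt_eqF.
  have [->|/sqnorm_gt0] := eqVneq x 0; last by rewrite ltNge s_le0.
  by rewrite mxform0 sqnorm0 mulr0.
exists l => //.
have M_sym : (l%:M - A)^T = l%:M - A by rewrite linearB /= tr_scalar_mx A_sym.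
have M_psd x : 0 <= mxform (l%:M - A) x x by rewrite mxform_scalarB subr_ge0.
(* An invertible l - A would be coercive, so l - 1/C would bound T. *)
have [M_unit|] := boolP (l%:M - A \in unitmx).
  have [C C_gt0 coercive] := unitmx_psd_coercive M_sym M_psd M_unit.
  have : ubound T (l - C^-1).
    apply: T_ubound => x; rewrite mulrBl.
    have : C^-1 * sqnorm x <= l * sqnorm x - mxform A x x.
      by rewrite ler_pdivrMl // -mxform_scalarB.
    lra.
  move=> /(ge_sup (ex_intro _ 0 T0)); rewrite -/l.
  by have := invr_gt0 C; rewrite C_gt0; lra.
rewrite unitmxE unitfE negbK => /det0P[v v_neq0 vM].
apply/eigenvalueP; exists v => //.
by move: vM; rewrite mulmxBr mul_mx_scalar => /eqP; rewrite subr_eq0 => /eqP ->.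
Qed.

Lemma psd_sup_eigenvalue n (A : 'M[R]_n) :
  A^T = A -> (forall x, 0 <= mxform A x x) -> (0 < n)%N ->
  let l := sup [set a | eigenvalue A a]%classic in
  0 <= l /\ forall x, mxform A x x <= l * sqnorm x.
Proof.
move=> A_sym A_psd n_gt0 /=; set E := [set a | _]%classic.
have [l El l_ub] := psd_max_eigenvalue A_sym A_psd n_gt0.
have E_le_l a : E a -> a <= l.
  move=> /eigenvalue_mxform[x /sqnorm_gt0 s_gt0 qa].
  by rewrite -(ler_pM2r s_gt0) -qa.
have -> : sup E = l.
  apply/eqP; rewrite eq_le ge_sup //=; last by exists l.
  by apply: sup_upper_bound => //; split; [exists l | exists l].
split=> //; have [x /sqnorm_gt0 s_gt0 ql] := eigenvalue_mxform El.
by rewrite -(pmulr_lge0 _ s_gt0) -ql.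
Qed.

Lemma sqnorm_mulmx_le s d (B : 'M[R]_(s, d)) v :
  sqnorm (B *m v) <= sigma_max B ^+ 2 * sqnorm v.
Proof.
case: d B v => [|d] B v; first by rewrite [v]flatmx0 mulmx0 !sqnorm0 mulr0.
have BtB_sym : (B^T *m B)^T = B^T *m B by rewrite trmx_mul trmxK.
have BtB_form x : mxform (B^T *m B) x x = sqnorm (B *m x).
  by rewrite sqnorm_mxform /mxform mulmx1 trmx_mul !mulmxA.
have BtB_psd x : 0 <= mxform (B^T *m B) x x by rewrite BtB_form sqnorm_ge0.
have [sup_ge0 sup_ub] := psd_sup_eigenvalue BtB_sym BtB_psd (ltn0Sn d).
by rewrite /sigma_max sqr_sqrtr // -BtB_form.
Qed.

End QuadraticForm.

Section SmoothDescent.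
Variables (R : realType) (d : nat) (G : 'cV[R]_d -> R) (L : R).
Hypothesis G_upper : forall u u',
  G u' - G u - dotv (gradient G u) (u' - u) <= L / 2 * sqnorm (u' - u).

Lemma smooth_gap_le (umin v u : 'cV[R]_d) t :
  (forall w, G umin <= G w) -> 0 < t ->
  G u - G v <= (G v - G umin) / t + L / 2 * (t + 1) * sqnorm (u - v).
Proof.
move=> umin_min t_gt0; set h := u - v; set g := dotv (gradient G v) h.
have descent : t * g <= G v - G umin + L / 2 * (t ^+ 2 * sqnorm h).
  have step : v - t *: h - v = (- t) *: h by rewrite addrAC subrr add0r scaleNr.
  have := G_upper v (v - t *: h); have := umin_min (v - t *: h).
  rewrite step dotvZr sqnormZ sqrrN mulNr -/g; lra.
have := ler_wpM2l (ltW t_gt0) (G_upper v u); rewrite -/h -/g => upper_u.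
rewrite -(ler_pM2l t_gt0).
have -> : t * ((G v - G umin) / t + L / 2 * (t + 1) * sqnorm h) =
          G v - G umin + t * (L / 2 * (t + 1) * sqnorm h) by field; rewrite gt_eqF.
lra.
Qed.

End SmoothDescent.

Lemma step_size_bound (R : realFieldType) (L nu eps K q : R) :
  0 < eps -> eps / 2 <= K -> 0 <= nu -> 0 <= q ->
  q <= eps ^+ 2 / (32 * K * (L + nu)) ->
  L / 2 * (4 * K / eps + 1) * q <= eps / 4.
Proof.
move=> eps_gt0 K_ge nu_ge0 q_ge0 q_le.
have K_gt0 : 0 < K by lra.
pose t := 4 * K / eps; have t_eps : t * eps = 4 * K by rewrite divfK ?gt_eqF.
have t_ge2 : 2 <= t by rewrite ler_pdivlMr //; lra.
have [L_le0|L_gt0] := lerP L 0.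
  have : 0 <= (t + 1) * q by rewrite mulr_ge0 //; lra.
  rewrite -/t mulrAC; have : L / 2 <= 0 by lra.
  nra.
pose P := L + nu; have P_gt0 : 0 < P by rewrite /P; lra.
have Lq_le : L * q <= P * q by rewrite ler_wpM2r // /P lerDl.
have tPq_le : 8 * t * (P * q) <= eps.
  rewrite -(ler_pM2r eps_gt0) -expr2.
  have -> : 8 * t * (P * q) * eps = q * (32 * K * P).
    by rewrite -[K](mulKf (_ : 4 != 0)) // -t_eps; field.
  by rewrite -ler_pdivlMr ?mulr_gt0.
rewrite -/t; have := mulr_ge0 (ltW P_gt0) q_ge0; nra.
Qed.

Theorem lemmaD2 (R : realType) (d s : nat) (G : 'cV[R]_d -> R) (L : R)
  (B : 'M[R]_(s, d)) (b : 'cV[R]_s) (u0 : 'cV[R]_d) (Rr eps : R)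
  (ustar unu umin u : 'cV[R]_d) :
  convex_fun G -> L_smooth L G ->
  (exists x : 'cV[R]_d, b = B *m x) ->
  0 < Rr -> 0 < eps ->
  let nu := eps / Rr ^+ 2 in
  let Gnu := fun v : 'cV[R]_d => G v + nu / 2 * sqnorm (u0 - v) in
  (* u* in Argmin_{Bu=b} G *)
  B *m ustar = b -> (forall v, B *m v = b -> G ustar <= G v) ->
  (* u*_nu = argmin_{Bu=b} G^nu *)
  B *m unu = b -> (forall v, B *m v = b -> Gnu unu <= Gnu v) ->
  (* min_u G(u) exists, attained at umin *)
  (forall v, G umin <= G v) ->
  let D := G ustar - G umin in
  sqnorm (u0 - ustar) <= Rr ^+ 2 ->
  let delta := eps ^+ 2 / (32 * (D + eps / 2) * (L + eps / Rr ^+ 2)) in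
  sqnorm (u - unu) <= delta ->
  G u - G ustar <= eps /\
  sqnorm (B *m u - b) <= delta * sigma_max B ^+ 2.
Proof.
move=> _ [_ G_upper] _ Rr_gt0 eps_gt0 nu Gnu B_ustar _ B_unu unu_min umin_min D
  ustar_near delta u_near.
split; last first.
  rewrite -B_unu -mulmxBr mulrC; apply: le_trans (sqnorm_mulmx_le _ _) _.
  by rewrite ler_wpM2l ?sqr_ge0.
have nu_gt0 : 0 < nu by rewrite divr_gt0 ?exprn_gt0.
have G_unu : G unu <= G ustar + eps / 2.
  have := unu_min _ B_ustar; rewrite /Gnu.
  have : nu / 2 * sqnorm (u0 - ustar) <= eps / 2.
    have -> : eps / 2 = nu / 2 * Rr ^+ 2 by rewrite /nu; field; rewrite gt_eqF.
    by rewrite ler_wpM2l // divr_ge0 // ltW.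
  have := mulr_ge0 (ltW nu_gt0) (sqnorm_ge0 (u0 - unu)); lra.
have K_ge : eps / 2 <= D + eps / 2 by rewrite lerDr subr_ge0.
set K := D + eps / 2 in K_ge *.
have t_gt0 : 0 < 4 * K / eps by rewrite !divr_gt0 //; lra.
have gap_le : (G unu - G umin) / (4 * K / eps) <= eps / 4.
  rewrite ler_pdivrMr // (_ : eps / 4 * (4 * K / eps) = K).
    by rewrite /K /D; lra.
  by field; rewrite gt_eqF.
have := smooth_gap_le G_upper unu u umin_min t_gt0.
have := step_size_bound eps_gt0 K_ge (ltW nu_gt0) (sqnorm_ge0 (u - unu)) u_near.
lra.
Qed.
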